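(* Assume that $\bar r^j\in\mathrm{recc}(C)$ for every $j\in N_0$, and that $C$ is bounded. Then $$\mathrm{conv}\Big(\Big\{x\in P^B\setminus C:\sum_{j\in N}\frac{x_j}{\alpha_j}\le1\Big\}\Big)=\Big\{x\in P^B:\sum_{j\in N}\frac{x_j}{\alpha_j}\le1\Big\},$$ $$\mathrm{conv}\Big(\Big\{x\in P^B\setminus C:\sum_{j\in N}\frac{x_j}{\beta_j}\ge1\Big\}\Big)=\Big\{x\in P^B:\sum_{j\in N}\frac{x_j}{\beta_j}\ge1\Big\}.$$
   Context: Let $A\in\mathbb{R}^{m\times n}$ have full row rank, $b\in\mathbb{R}^m$, and $P=\{x\in\mathbb{R}^n_+:Ax=b\}$. Let $C\subseteq\mathbb{R}^n$ be an open convex set. Fix a basis $B$ of $P$ with nonbasic set $N=\{1,\dots,n\}\setminus B$. Write $P=\{x:x_i=\bar b_i-\sum_{j\in N}\bar a_{ij}x_j\ (i\in B),\ x\ge0\}$ with $\bar b\ge0$. The basic solution $\bar x$ has $\bar x_i=\bar b_i$ ($i\in B$) and $0$ ($i\in N$). $P^B$ is obtained by dropping $x_i\ge0$ for $i\in B$. For $j\in N$, $\bar r^j$ has $\bar r^j_k=-\bar a_{kj}$ ($k\in B$), $\bar r^j_j=1$, and $0$ otherwise. Thus $P^B=\{\bar x+\sum_{j\in N}x_j\bar r^j:x_j\ge0\}$, and for $x\in P^B$ the $x_j$ ($j\in N$) are the coefficients in this representation. It is assumed that $\bar x\notin\mathrm{cl}(C)$. For $j\in N$, $\alpha_j=\inf\{\lambda\ge0:\bar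 x+\lambda\bar r^j\in C\}$ and $\beta_j=\sup\{\lambda\ge0:\bar x+\lambda\bar r^j\in C\}$, with $\alpha_j=+\infty$, $\beta_j=-\infty$ if the halfline misses $C$. Let $N_0=\{j\in N:\alpha_j=+\infty,\beta_j=-\infty\}$. We use the convention $t/\pm\infty=0$. For a set $K$, $\mathrm{recc}(K)=\{d:x+\lambda d\in K\ \forall x\in K,\lambda\ge0\}$. *)

From mathcomp Require Import all_boot all_order all_algebra.
From mathcomp Require Import all_classical all_reals all_analysis.
Set Implicit Arguments. Unset Strict Implicit. Unset Printing Implicit Defensive.
Import Order.TTheory GRing.Theory Num.Theory numFieldNormedType.Exports.
Local Open Scope classical_set_scope.
Local Open Scope ring_scope.

Section Defs.
Variables (R : realType) (m n : nat).

Definition is_basis (A : 'M[R]_(m, n)) (B : {set 'I_n}) : Prop :=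
  #|B| = m /\
  forall y : 'rV[R]_n, (forall j, j \notin B -> y ord0 j = 0) ->
    A *m y^T = 0 -> y = 0.

(* P^B : drop the constraints x_i >= 0 for i in B *)
Definition PB (A : 'M[R]_(m, n)) (b : 'cV[R]_m) (B : {set 'I_n}) : set 'rV[R]_n :=
  [set x | A *m x^T = b /\ forall j, j \notin B -> 0 <= x ord0 j].

Definition xbar (B : {set 'I_n}) (bbar : 'I_n -> R) : 'rV[R]_n :=
  \row_k (if k \in B then bbar k else 0).

Definition rbar (B : {set 'I_n}) (abar : 'I_n -> 'I_n -> R) (j : 'I_n) : 'rV[R]_n :=
  \row_k (if k \in B then - abar k j else if k == j then 1 else 0).

Definition alpha (C : set 'rV[R]_n) (x0 r : 'rV[R]_n) : \bar R :=
  ereal_inf [set l%:E | l in [set l : R | 0 <= l /\ C (x0 + l *: r)]].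

Definition beta (C : set 'rV[R]_n) (x0 r : 'rV[R]_n) : \bar R :=
  ereal_sup [set l%:E | l in [set l : R | 0 <= l /\ C (x0 + l *: r)]].

Definition recc (K : set 'rV[R]_n) : set 'rV[R]_n :=
  [set d | forall x, K x -> forall l : R, 0 <= l -> K (x + l *: d)].

Definition conv_hull (S : set 'rV[R]_n) : set 'rV[R]_n :=
  [set x | exists (k : nat) (w : 'I_k -> R) (p : 'I_k -> 'rV[R]_n),
     (forall i, 0 <= w i) /\ \sum_(i < k) w i = 1 /\
     (forall i, S (p i)) /\ x = \sum_(i < k) w i *: p i].

End Defs.

(* t / a with the convention t / (+-oo) = 0 *)
Definition ediv (R : realType) (t : R) (a : \bar R) : R :=
  match a with EFin r => t / r | _ => 0 end.

(* If x in P^B lies outside C, it is its own convex combination.  Otherwise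
   x in C, so no ray xbar + l rbar^j misses C: for j in N_0 the ray direction
   would be a nonzero recession direction of the bounded set C.  Hence alpha_j
   and beta_j are finite, alpha_j > 0 because xbar is not in cl(C), and since C
   is open the points xbar + alpha_j rbar^j and xbar + l rbar^j for l >= beta_j
   lie outside C.  Writing x = xbar + sum_j x_j rbar^j, x is the convex
   combination of xbar and the xbar + alpha_j rbar^j with weights
   1 - sum_j x_j/alpha_j and x_j/alpha_j; with s = sum_j x_j/beta_j >= 1, it is
   the convex combination of the xbar + s beta_j rbar^j with weights
   x_j/(s beta_j).  The other inclusions hold because P^B and the two
   half-spaces are convex. *)

From mathcomp Require Import all_boot all_order all_algebra.
From mathcomp Require Import all_classical all_reals all_analysis.
From mathcomp Require Import lra.
Import Order.TTheory GRing.Theory Num.Theory numFieldNormedType.Exports.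
Local Open Scope classical_set_scope.
Local Open Scope ring_scope.

Definition ray_inside (R : realType) (V : normedModType R) (C : set V) (x0 r : V) : set R :=
  [set l | 0 <= l /\ C (x0 + l *: r)].
Arguments ray_inside {R V}.

Section Ray.
Context {R : realType} {V : normedModType R} {C : set V} {x0 r : V}.
Local Notation ray_inside := (ray_inside C x0 r).

Hypothesis oC : open C.

Lemma ray_inside_open_ball l : C (x0 + l *: r) ->
  exists2 e : R, 0 < e & forall l', `|l - l'| < e -> C (x0 + l' *: r).
Proof.
move=> Cl.
have oT : open [set l : R | C (x0 + l *: r)].
  apply: (@open_comp _ _ (fun l : R => x0 + l *: r)) => // l' _.
  by apply: cvgD; [exact: cvg_cst | exact: scalel_continuous].
move: oT; rewrite openE => /(_ l Cl) /nbhs_ballP [e e0 He].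
by exists e => // l' ll'; apply: He; rewrite -ball_normE.
Qed.

Lemma not_inside_ray_inf : ~ C x0 -> ray_inside !=set0 ->
  ~ C (x0 + inf ray_inside *: r).
Proof.
move=> nCx0 hits Cinf.
have lb : has_lbound ray_inside by exists 0 => l [].
have inf_ge0 : 0 <= inf ray_inside by apply: lb_le_inf => // l [].
have [e e0 He] := ray_inside_open_ball _ Cinf.
have [inf_lt_e|e_le_inf] := ltP (inf ray_inside) e.
  by apply: nCx0; rewrite -[x0]addr0 -(scale0r r); apply: He; rewrite subr0 ger0_norm.
have : ray_inside (inf ray_inside - e / 2).
  split; first lra.
  by apply: He; rewrite opprB addrC subrK gtr0_norm; lra.
by move/(ge_inf lb); lra.
Qed.

Lemma not_inside_ray_sup l : has_ubound ray_inside ->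
  sup ray_inside <= l -> 0 <= l -> ~ C (x0 + l *: r).
Proof.
move=> ub sup_le l0 Cl.
have [e e0 He] := ray_inside_open_ball _ Cl.
have : ray_inside (l + e / 2).
  split; first lra.
  by apply: He; rewrite opprD addNKr normrN gtr0_norm; lra.
by move/(ub_le_sup ub); lra.
Qed.

Lemma ray_inf_gt0 : ~ closure C x0 -> ray_inside !=set0 -> 0 < inf ray_inside.
Proof.
move=> ncl hits.
have [U nU CU0] : exists2 U, nbhs x0 U & ~ (C `&` U !=set0).
  by apply: contrapT => nE; apply: ncl => U nU; apply: contrapT => ?; apply: nE; exists U.
move: nU => /nbhs_ballP [e e0 He].
have r1 : 0 < `|r| + 1 by rewrite ltr_wpDl.
apply: (@lt_le_trans _ _ (e / (`|r| + 1))); first by rewrite divr_gt0.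
apply: lb_le_inf => // l [l0 Cl]; rewrite ler_pdivrMr // leNgt; apply/negP => hl.
apply: CU0; exists (x0 + l *: r); split => //; apply: He.
rewrite -ball_normE /ball_ /= opprD addrA subrr sub0r normrN normrZ ger0_norm //.
by apply: le_lt_trans hl; rewrite ler_wpM2l // lerDl.
Qed.

Lemma ray_inside_ubound : bounded_set C -> r != 0 -> has_ubound ray_inside.
Proof.
move=> [M [_ HM]] r0.
have rpos : 0 < `|r| by rewrite normr_gt0.
exists ((M + 1 + `|x0|) / `|r|) => l [l0 Cl]; rewrite ler_pdivlMr //.
have Cbound : `|x0 + l *: r| <= M + 1 by apply: HM Cl; lra.
have := ler_normB (x0 + l *: r) x0; rewrite [_ - x0]addrC addKr normrZ ger0_norm //.
lra.
Qed.

Lemma ray_sup_gt0 : ~ closure C x0 -> ray_inside !=set0 -> has_ubound ray_inside ->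
  0 < sup ray_inside.
Proof.
move=> ncl [l hl] ub; have inf_gt0 := ray_inf_gt0 ncl (ex_intro _ l hl).
have lb : has_lbound ray_inside by exists 0 => l' [].
by apply: lt_le_trans inf_gt0 (le_trans (ge_inf lb hl) (ub_le_sup ub hl)).
Qed.

Lemma bounded_ray_exits : bounded_set C -> r != 0 -> C x0 ->
  exists2 l, 0 <= l & ~ C (x0 + l *: r).
Proof.
move=> BC r0 Cx0; have [u ub] := ray_inside_ubound BC r0.
exists (`|u| + 1); first by rewrite addr_ge0.
move=> Cl; have : `|u| + 1 <= u by apply: ub; split => //; rewrite addr_ge0.
by have := ler_norm u; lra.
Qed.

End Ray.

Section RayExtent.
Context {R : realType} {n : nat} {C : set 'rV[R]_n} {x0 r : 'rV[R]_n}.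

Lemma alphaE : ray_inside C x0 r !=set0 -> alpha C x0 r = (inf (ray_inside C x0 r))%:E.
Proof. by move=> hits; rewrite /alpha ereal_inf_EFin //; exists 0 => l []. Qed.

Lemma betaE : has_ubound (ray_inside C x0 r) -> ray_inside C x0 r !=set0 ->
  beta C x0 r = (sup (ray_inside C x0 r))%:E.
Proof. by move=> ub hits; rewrite /beta ereal_sup_EFin. Qed.

Lemma alpha_beta_set0 : ray_inside C x0 r = set0 ->
  alpha C x0 r = +oo%E /\ beta C x0 r = -oo%E.
Proof.
by rewrite /alpha /beta -/(ray_inside C x0 r) => ->; rewrite image_set0 ereal_inf0 ereal_sup0.
Qed.

Lemma bounded_not_recc : bounded_set C -> r != 0 -> C !=set0 -> ~ recc C r.
Proof.
move=> BC r0 [x Cx] rC; have [l l0 []] := bounded_ray_exits BC r0 Cx.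
exact: rC.
Qed.

End RayExtent.

Lemma ediv0 (R : realType) (a : \bar R) : ediv 0 a = 0.
Proof. by case: a => [r||] //=; rewrite mul0r. Qed.

Lemma ediv_sum (R : realType) k (w t : 'I_k -> R) (a : \bar R) :
  ediv (\sum_(i < k) w i * t i) a = \sum_(i < k) w i * ediv (t i) a.
Proof.
case: a => [r||] /=; first by rewrite mulr_suml; apply: eq_bigr => i _; rewrite mulrA.
all: by rewrite big1 // => i _; rewrite mulr0.
Qed.

Lemma ler_convex_comb (R : realType) k (w t : 'I_k -> R) c :
  (forall i, 0 <= w i) -> \sum_(i < k) w i = 1 -> (forall i, t i <= c) ->
  \sum_(i < k) w i * t i <= c.
Proof.
move=> w0 w1 tc; rewrite -[leRHS]mul1r -w1 mulr_suml.
by apply: ler_sum => i _; rewrite ler_wpM2l.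
Qed.

Lemma ger_convex_comb (R : realType) k (w t : 'I_k -> R) c :
  (forall i, 0 <= w i) -> \sum_(i < k) w i = 1 -> (forall i, c <= t i) ->
  c <= \sum_(i < k) w i * t i.
Proof.
move=> w0 w1 tc; rewrite -[leLHS]mul1r -w1 mulr_suml.
by apply: ler_sum => i _; rewrite ler_wpM2l.
Qed.

Section ConvHull.
Context {R : realType} {n : nat}.
Implicit Types (S : set 'rV[R]_n) (x : 'rV[R]_n).

Lemma conv_hull_comb S k (w : 'I_k -> R) (p : 'I_k -> 'rV[R]_n) :
  (forall i, 0 <= w i) -> \sum_(i < k) w i = 1 -> (forall i, w i != 0 -> S (p i)) ->
  conv_hull S (\sum_(i < k) w i *: p i).
Proof.
move=> w0 w1 Sp.
have [i0 wi0] : exists i0, w i0 != 0.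
  apply: contrapT => /forallNP w_eq0; move: w1; rewrite big1 => [/eqP|i _].
    by rewrite eq_sym oner_eq0.
  by apply/eqP/negPn/negP; exact: w_eq0.
exists k, w, (fun i => if w i == 0 then p i0 else p i); do 3 split => //.
- by move=> i; case: ifPn => [_|/Sp //]; exact: Sp.
- by apply: eq_bigr => i _; case: eqP => // ->; rewrite !scale0r.
Qed.

Lemma subset_conv_hull S : S `<=` conv_hull S.
Proof.
move=> x Sx.
have := @conv_hull_comb S 1 (fun=> 1) (fun=> x) (fun=> ler01) (big_ord1 _ _) (fun=> fun=> Sx).
by rewrite big_ord1 scale1r.
Qed.

(* [x0] gets weight [1 - \sum_(j | P j) c j / t j], so it only matters when
   that weight is positive. *)
Lemma conv_hull_ray_comb S k (P : pred 'I_k) x0 (d : 'I_k -> 'rV[R]_n) (c t : 'I_k -> R) :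
  (forall j, P j -> 0 < t j) -> (forall j, P j -> 0 <= c j) ->
  \sum_(j < k | P j) c j / t j <= 1 -> (\sum_(j < k | P j) c j / t j < 1 -> S x0) ->
  (forall j, P j -> S (x0 + t j *: d j)) ->
  conv_hull S (x0 + \sum_(j < k | P j) c j *: d j).
Proof.
move=> t0 c0 s1 Sx0 Sd; set s := \sum_(j < k | P j) c j / t j.
pose w i := oapp (fun j => if P j then c j / t j else 0) (1 - s) (unlift ord0 i).
pose p i := oapp (fun j => x0 + t j *: d j) x0 (unlift ord0 i).
have comb : \sum_(i < k.+1) w i *: p i = x0 + \sum_(j < k | P j) c j *: d j.
  rewrite big_ord_recl /w /p unlift_none.
  under eq_bigr => i _ do rewrite liftK /= (fun_if ( *:%R^~ _)) scale0r.
  rewrite -big_mkcond /=.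
  under eq_bigr => j Pj do rewrite scalerDr scalerA divfK ?gt_eqF ?t0 //.
  by rewrite big_split /= -scaler_suml addrA -scalerDl subrK scale1r.
rewrite -comb; apply: conv_hull_comb => [i||i].
- rewrite /w; case: unlift => [j|] /=; last by rewrite subr_ge0.
  by case: ifP => // Pj; rewrite divr_ge0 ?c0 // ltW ?t0.
- rewrite big_ord_recl /w unlift_none.
  by under eq_bigr => j _ do rewrite liftK; rewrite -big_mkcond /= subrK.
- rewrite /w /p; case: unlift => [j|] /=.
    by case: ifP => [Pj _|_]; [apply: Sd | rewrite eqxx].
  by rewrite subr_eq0 eq_sym => s_neq1; apply: Sx0; rewrite lt_neqAle s_neq1 s1.
Qed.

End ConvHull.

Section BasicSolution.
Context {R : realType} {m n : nat} {A : 'M[R]_(m, n)} {b : 'cV[R]_m}.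
Context {B : {set 'I_n}} {abar : 'I_n -> 'I_n -> R} {bbar : 'I_n -> R}.
Local Notation xb := (xbar B bbar).
Local Notation r := (rbar B abar).

Lemma xbar_nonbasic k : k \notin B -> xb ord0 k = 0.
Proof. by move=> /negPf kB; rewrite mxE kB. Qed.

Lemma ray_nonbasic j t k : k \notin B -> (xb + t *: r j) ord0 k = if k == j then t else 0.
Proof. by move=> /negPf kB; rewrite !mxE kB add0r; case: eqP; rewrite ?mulr1 ?mulr0. Qed.

Lemma rbar_neq0 j : j \notin B -> r j != 0.
Proof.
move=> /negPf jB; apply/eqP => /rowP /(_ j) /eqP; rewrite !mxE jB eqxx.
by rewrite oner_eq0.
Qed.

Lemma xbar_ediv_sum (a : 'I_n -> \bar R) :
  \sum_(k < n | k \notin B) ediv (xb ord0 k) (a k) = 0.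
Proof. by rewrite big1 // => k kB; rewrite xbar_nonbasic // ediv0. Qed.

Lemma ray_ediv_sum j t (a : 'I_n -> \bar R) : j \notin B ->
  \sum_(k < n | k \notin B) ediv ((xb + t *: r j) ord0 k) (a k) = ediv t (a j).
Proof.
move=> jB; rewrite (bigD1 j) //= ray_nonbasic // eqxx big1 ?addr0 //.
by move=> k /andP[kB kj]; rewrite ray_nonbasic // (negPf kj) ediv0.
Qed.

Lemma conv_hull_PB_sub (Q : R -> Prop) (C : set 'rV[R]_n) (a : 'I_n -> \bar R) :
  (forall k (w t : 'I_k -> R), (forall i, 0 <= w i) -> \sum_(i < k) w i = 1 ->
     (forall i, Q (t i)) -> Q (\sum_(i < k) w i * t i)) ->
  conv_hull [set x | PB A b B x /\ ~ C x /\ Q (\sum_(j < n | j \notin B) ediv (x ord0 j) (a j))]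
  `<=` [set x | PB A b B x /\ Q (\sum_(j < n | j \notin B) ediv (x ord0 j) (a j))].
Proof.
move=> Qconv _ [k [w [p [w0 [w1 [Sp ->]]]]]].
have coord j : (\sum_(i < k) w i *: p i) ord0 j = \sum_(i < k) w i * p i ord0 j.
  by rewrite summxE; apply: eq_bigr => i _; rewrite mxE.
split; first split.
- rewrite (linear_sum (@trmx R 1 n)) mulmx_sumr.
  under eq_bigr => i _ do rewrite linearZ /= -scalemxAr (proj1 (proj1 (Sp i))).
  by rewrite -scaler_suml w1 scale1r.
- move=> j jB; rewrite coord; apply: sumr_ge0 => i _.
  by rewrite mulr_ge0 //; apply: (proj2 (proj1 (Sp i))).
under eq_bigr => j _ do rewrite coord ediv_sum.
rewrite exchange_big /=; under eq_bigr => i _ do rewrite -mulr_sumr.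
by apply: Qconv => // i; have [_ []] := Sp i.
Qed.

Hypothesis tableau : forall x : 'rV[R]_n, A *m x^T = b <->
  (forall i, i \in B -> x ord0 i = bbar i - \sum_(j < n | j \notin B) abar i j * x ord0 j).

Lemma PB_xbar : PB A b B xb.
Proof.
split=> [|k kB]; last by rewrite xbar_nonbasic.
apply/tableau => i iB; rewrite big1 ?subr0; first by rewrite mxE iB.
by move=> j jB; rewrite xbar_nonbasic // mulr0.
Qed.

Lemma PB_ray j t : j \notin B -> 0 <= t -> PB A b B (xb + t *: r j).
Proof.
move=> jB t0; split=> [|k kB]; last by rewrite ray_nonbasic //; case: eqP.
apply/tableau => i iB; rewrite (bigD1 j) //= big1 ?addr0; last first.
  by move=> k /andP[kB kj]; rewrite ray_nonbasic // (negPf kj) mulr0.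
by rewrite (ray_nonbasic _ _ _ jB) eqxx !mxE iB mulrN mulrC.
Qed.

Lemma PB_decomposition x : A *m x^T = b ->
  x = xb + \sum_(j < n | j \notin B) x ord0 j *: r j.
Proof.
move=> /tableau Hx; apply/rowP => k; rewrite !mxE summxE.
under eq_bigr => j _ do rewrite !mxE.
case: ifP => kB.
  by rewrite Hx // -sumrN; congr (_ + _); apply: eq_bigr => j _; rewrite mulrN mulrC.
rewrite add0r (bigD1 k) /=; last by rewrite kB.
by rewrite eqxx mulr1 big1 ?addr0 // => j /andP[_ /negPf jk]; rewrite eq_sym jk mulr0.
Qed.

Context {C : set 'rV[R]_n}.
Hypotheses (oC : open C) (xb_notin_clC : ~ closure C xb) (bounded_C : bounded_set C).
Hypothesis recc_N0 : forall j, j \notin B ->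
  alpha C xb (r j) = +oo%E -> beta C xb (r j) = -oo%E -> recc C (r j).
Local Notation alpha_sum x :=
  (\sum_(j < n | j \notin B) ediv (x ord0 j) (alpha C xb (r j))).
Local Notation beta_sum x :=
  (\sum_(j < n | j \notin B) ediv (x ord0 j) (beta C xb (r j))).

Lemma xbar_notin : ~ C xb.
Proof. by move=> ?; apply: xb_notin_clC; exact: subset_closure. Qed.

Lemma ray_inside_nonempty x j : C x -> j \notin B -> ray_inside C xb (r j) !=set0.
Proof.
move=> Cx jB; apply/set0P/eqP => /alpha_beta_set0 [alpha_oo beta_oo].
apply: bounded_not_recc bounded_C (rbar_neq0 _ jB) (ex_intro _ x Cx) _.
exact: recc_N0 _ jB alpha_oo beta_oo.
Qed.

Lemma alpha_cut_sub_conv_hull :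
  [set x | PB A b B x /\ alpha_sum x <= 1]
  `<=` conv_hull [set x | PB A b B x /\ ~ C x /\ alpha_sum x <= 1].
Proof.
move=> x [[Ax x_ge0] sum_le1]; have [Cx|nCx] := pselect (C x); last exact: subset_conv_hull.
pose a j := inf (ray_inside C xb (r j)).
have hits j : j \notin B -> ray_inside C xb (r j) !=set0 by exact: ray_inside_nonempty Cx.
have alpha_inf j : j \notin B -> alpha C xb (r j) = (a j)%:E by move=> /hits /alphaE.
have a_gt0 j : j \notin B -> 0 < a j by move=> /hits; exact: ray_inf_gt0 xb_notin_clC.
rewrite (PB_decomposition _ Ax); apply: conv_hull_ray_comb => [||||j jB].
- exact: a_gt0.
- exact: x_ge0.
- by move: sum_le1; under eq_bigr => j jB do rewrite alpha_inf //.
- by move=> _; split; [exact: PB_xbar | split; [exact: xbar_notin | rewrite xbar_ediv_sum]].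
split; first by apply: PB_ray; rewrite ?ltW ?a_gt0.
split; first exact: not_inside_ray_inf oC xbar_notin (hits j jB).
by rewrite ray_ediv_sum // alpha_inf //= divff // gt_eqF // a_gt0.
Qed.

Lemma beta_cut_sub_conv_hull :
  [set x | PB A b B x /\ 1 <= beta_sum x]
  `<=` conv_hull [set x | PB A b B x /\ ~ C x /\ 1 <= beta_sum x].
Proof.
move=> x [[Ax x_ge0] sum_ge1]; have [Cx|nCx] := pselect (C x); last exact: subset_conv_hull.
pose e j := sup (ray_inside C xb (r j)).
have hits j : j \notin B -> ray_inside C xb (r j) !=set0 by exact: ray_inside_nonempty Cx.
have ub j : j \notin B -> has_ubound (ray_inside C xb (r j)).
  by move=> jB; exact: ray_inside_ubound bounded_C (rbar_neq0 _ jB).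
have beta_sup j : j \notin B -> beta C xb (r j) = (e j)%:E.
  by move=> jB; exact: betaE (ub j jB) (hits j jB).
have e_gt0 j : j \notin B -> 0 < e j.
  by move=> jB; exact: ray_sup_gt0 xb_notin_clC (hits j jB) (ub j jB).
set s := \sum_(j < n | j \notin B) x ord0 j / e j.
have s_ge1 : 1 <= s by move: sum_ge1; under eq_bigr => j jB do rewrite beta_sup //.
have s_gt0 : 0 < s := lt_le_trans ltr01 s_ge1.
(* Stretching the rays by [s] makes the weights sum to one, and [s >= 1] keeps
   the stretched points beyond [beta]. *)
have sum1 : \sum_(j < n | j \notin B) x ord0 j / (s * e j) = 1.
  rewrite -[RHS](divff (lt0r_neq0 s_gt0)) {2}/s mulr_suml.
  by apply: eq_bigr => j _; rewrite invfM mulrCA mulrC.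
rewrite (PB_decomposition _ Ax); apply: conv_hull_ray_comb => [||||j jB].
- by move=> j jB; apply: (mulr_gt0 s_gt0 (e_gt0 j jB)).
- exact: x_ge0.
- by rewrite sum1.
- by rewrite sum1 ltxx.
have se_ge0 : 0 <= s * e j by rewrite mulr_ge0 ?ltW ?e_gt0.
split; first exact: PB_ray.
split.
  apply: not_inside_ray_sup oC _ (ub j jB) _ se_ge0.
  exact: ler_peMl (ltW (e_gt0 j jB)) s_ge1.
by rewrite ray_ediv_sum // beta_sup //= mulfK // gt_eqF // e_gt0.
Qed.

End BasicSolution.

Theorem proposition1 (R : realType) (m n : nat)
  (A : 'M[R]_(m, n)) (b : 'cV[R]_m) (C : set 'rV[R]_n)
  (B : {set 'I_n}) (abar : 'I_n -> 'I_n -> R) (bbar : 'I_n -> R) :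
  \rank A = m ->
  open C -> convex_set C ->
  is_basis A B ->
  (forall x : 'rV[R]_n, A *m x^T = b <->
     (forall i, i \in B ->
        x ord0 i = bbar i - \sum_(j < n | j \notin B) abar i j * x ord0 j)) ->
  (forall i, i \in B -> 0 <= bbar i) ->
  ~ closure C (xbar B bbar) ->
  (forall j, j \notin B ->
     alpha C (xbar B bbar) (rbar B abar j) = +oo%E ->
     beta C (xbar B bbar) (rbar B abar j) = -oo%E ->
     recc C (rbar B abar j)) ->
  bounded_set C ->
  conv_hull [set x | PB A b B x /\ ~ C x /\
        \sum_(j < n | j \notin B) ediv (x ord0 j) (alpha C (xbar B bbar) (rbar B abar j)) <= 1]
  = [set x | PB A b B x /\
        \sum_(j < n | j \notin B) ediv (x ord0 j) (alpha C (xbar B bbar) (rbar B abar j)) <= 1]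
  /\
  conv_hull [set x | PB A b B x /\ ~ C x /\
        \sum_(j < n | j \notin B) ediv (x ord0 j) (beta C (xbar B bbar) (rbar B abar j)) >= 1]
  = [set x | PB A b B x /\
        \sum_(j < n | j \notin B) ediv (x ord0 j) (beta C (xbar B bbar) (rbar B abar j)) >= 1].
Proof.
move=> _ oC _ _ tableau _ xb_notin_clC recc_N0 bounded_C.
split; apply/seteqP; split.
- apply: (conv_hull_PB_sub (fun s => s <= 1)) => k w t; exact: ler_convex_comb.
- exact: alpha_cut_sub_conv_hull.
- apply: (conv_hull_PB_sub (fun s => 1 <= s)) => k w t; exact: ger_convex_comb.
- exact: beta_cut_sub_conv_hull.
Qed.
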